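(* Let $M=L_1\,C_1\,L_2\,C_2\,L_3$ be a unitary on $\mathbb{C}^2\otimes\mathbb{C}^2\otimes\mathbb{C}^2$, where $L_1,L_2,L_3$ are local unitaries (each of the form $V\otimes W\otimes X$ with $V,W,X$ $2\times2$ unitaries), and each $C_k$ is a CNOT gate acting on some ordered pair of distinct qubits among $A,B,C$ (one qubit as control, another as target) and as the identity on the remaining qubit. Then $\mathrm{sr}(M)\in\{1,2,4\}$.
   Context: $T=|0\rangle\langle0|\otimes I_2+|1\rangle\langle1|\otimes\sigma_1$ is the CNOT gate on two qubits (first control, second target), where $\sigma_1=\begin{bmatrix}0&1\\1&0\end{bmatrix}$. For a matrix $U$ on $\mathbb{C}^2\otimes\mathbb{C}^2\otimes\mathbb{C}^2$ (systems $A,B,C$), its Schmidt rank $\mathrm{sr}(U)$ is the least integer $r$ such that $U=\sum_{j=1}^r A_j\otimes B_j\otimes C_j$ with $A_j,B_j,C_j$ complex $2\times 2$ matrices (i.e. the tensor rank of $U$). *)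

From HB Require Import structures.
From mathcomp Require Import all_boot all_order all_algebra.
From mathcomp Require Import complex mxtens.
From mathcomp Require Import reals.
Set Implicit Arguments. Unset Strict Implicit. Unset Printing Implicit Defensive.
Import Order.TTheory GRing.Theory Num.Theory.
Local Open Scope ring_scope.

Section Defs.
Variable R : realType.
Local Notation C := (complex R).

(* Operators on C^2 (x) C^2 (x) C^2, systems A, B, C in this order. *)
Definition tens3 (A B D : 'M[C]_2) : 'M[C]_(2 * 2 * 2) := (A *t B) *t D.

Definition adjoint2 (V : 'M[C]_2) : 'M[C]_2 := (map_mx Num.conj V)^T.
Definition unitary2 (V : 'M[C]_2) : Prop := V *m adjoint2 V = 1%:M.

Definition local_unitary (L : 'M[C]_(2 * 2 * 2)) : Prop :=
  exists V W X : 'M[C]_2,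
    [/\ unitary2 V, unitary2 W, unitary2 X & L = tens3 V W X].

Definition proj0 : 'M[C]_2 := \matrix_(i, j) (if (i == 0) && (j == 0) then 1 else 0).
Definition proj1 : 'M[C]_2 := \matrix_(i, j) (if (i == 1) && (j == 1) then 1 else 0).
Definition sigma1 : 'M[C]_2 := \matrix_(i, j) (if i != j then 1 else 0).

(* CNOT with control qubit c and target qubit t (qubits 0,1,2 = A,B,C),
   identity on the remaining qubit:
   |0><0|_c (x) I  +  |1><1|_c (x) sigma1_t  (tensor factors in order A,B,C) *)
Definition cnot3 (c t : 'I_3) : 'M[C]_(2 * 2 * 2) :=
  let f (k : 'I_3) := if k == c then proj0 else 1%:M in
  let g (k : 'I_3) := if k == c then proj1 else if k == t then sigma1 else 1%:M in
  tens3 (f 0) (f 1) (f 2%:R) + tens3 (g 0) (g 1) (g 2%:R).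

Definition tensor_decomp (U : 'M[C]_(2 * 2 * 2)) (r : nat) : Prop :=
  exists (A B D : 'I_r -> 'M[C]_2), U = \sum_(j < r) tens3 (A j) (B j) (D j).

Definition schmidt_rank_is (U : 'M[C]_(2 * 2 * 2)) (r : nat) : Prop :=
  tensor_decomp U r /\ forall r', tensor_decomp U r' -> (r <= r')%N.

End Defs.

Arguments cnot3 {R} c t.
Arguments proj0 {R}. Arguments proj1 {R}. Arguments sigma1 {R}.

(* 1. A CNOT gate is the CZ gate conjugated by a Hadamard gate on its target,
      and CZ is symmetric in its two qubits.  Two pairs of qubits among three
      always share a qubit k, so the product takes the form
      P (CZ(k,o1) (W_0 (x) W_1 (x) W_2) CZ(k,o2)) Q with P, Q invertible local
      operators and every W_i a nonzero multiple of a unitary.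
   2. The Schmidt rank is invariant under invertible local operators, and a
      scaled unitary 2x2 matrix has no zero entry, or is diagonal, or is
      antidiagonal.
   3. If o1 = o2, the middle operator acts on qubits k, o1 only (up to a local
      factor) with coefficient matrix u_x W_y (+-1) in the basis of products of
      matrix units; its rank is 4, 2 or 1 according to the zero patterns of u
      and W.  If o1 <> o2, it is sum_x u_x E_x (x) Z^x1 (x) Z^x2, whose rank is
      the number (4 or 2) of nonzero entries of u.
   Upper bounds are explicit decompositions; lower bounds are a flattening
   argument: pairing the operator with product test operators gives an
   invertible matrix which factors through any decomposition. *)

From HB Require Import structures.
From mathcomp Require Import all_boot all_order all_algebra.
From mathcomp Require Import complex mxtens.
From mathcomp Require Import reals.
From mathcomp.algebra_tactics Require Import ring.
Set Implicit Arguments. Unset Strict Implicit. Unset Printing Implicit Defensive.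
Import GRing.Theory Num.Theory.
Local Open Scope ring_scope.

Lemma ord2P (i : 'I_2) : i = ord0 \/ i = ord_max.
Proof. by case: i => [[|[|//]] H]; [left|right]; apply: val_inj. Qed.

Lemma ord3P (i : 'I_3) : [\/ i = 0, i = 1 | i = 2%:R].
Proof.
by case: i => [[|[|[|//]]] H]; [apply: Or31|apply: Or32|apply: Or33]; apply: val_inj.
Qed.

Lemma ord4P (p : 'I_4) :
  [\/ p = Ordinal (isT : 0 < 4)%N, p = Ordinal (isT : 1 < 4)%N,
      p = Ordinal (isT : 2 < 4)%N | p = Ordinal (isT : 3 < 4)%N].
Proof.
case: p => [[|[|[|[|//]]]] H];
  [apply: Or41|apply: Or42|apply: Or43|apply: Or44]; exact: val_inj.
Qed.

Lemma sum2 (V : nmodType) (F : 'I_2 -> V) : \sum_(i < 2) F i = F ord0 + F ord_max.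
Proof. by rewrite !big_ord_recr big_ord0 /= add0r; congr (F _ + F _); apply: val_inj. Qed.

Lemma sum4 (V : nmodType) (F : 'I_4 -> V) :
  \sum_(i < 4) F i = F (Ordinal (isT : 0 < 4)%N) + F (Ordinal (isT : 1 < 4)%N)
                    + F (Ordinal (isT : 2 < 4)%N) + F (Ordinal (isT : 3 < 4)%N).
Proof.
by rewrite !big_ord_recr big_ord0 /= add0r; congr (F _ + F _ + F _ + F _); apply: val_inj.
Qed.

Lemma prod3 (V : comNzRingType) (F : 'I_3 -> V) : \prod_(i < 3) F i = F 0 * F 1 * F 2%:R.
Proof.
by rewrite !big_ord_recr big_ord0 /= mul1r; congr (F _ * F _ * F _); apply: val_inj.
Qed.

Lemma third_qubit (k o : 'I_3) : k != o -> exists2 z, k != z & o != z.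
Proof.
case: (ord3P k) => ->; case: (ord3P o) => -> // _.
- by exists 2%:R. - by exists 1. - by exists 2%:R.
- by exists 0. - by exists 1. - by exists 0.
Qed.

Lemma third_qubit_unique (k a b i : 'I_3) :
  k != a -> k != b -> a != b -> i != k -> i != a -> i = b.
Proof.
by case: (ord3P k) => ->; case: (ord3P a) => ->; case: (ord3P b) => ->;
  case: (ord3P i) => ->.
Qed.

Lemma shared_qubit (c1 t1 c2 t2 : 'I_3) : c1 != t1 -> c2 != t2 ->
  exists k, ((k == c1) || (k == t1)) && ((k == c2) || (k == t2)).
Proof.
move=> ct1 ct2.
case: (eqVneq c1 c2) => [<-|n1]; first by exists c1; rewrite eqxx.
case: (eqVneq c1 t2) => [<-|n2]; first by exists c1; rewrite eqxx orbT.
case: (eqVneq t1 c2) => [<-|n3]; first by exists t1; rewrite eqxx orbT.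
case: (eqVneq t1 t2) => [<-|n4]; first by exists t1; rewrite eqxx !orbT.
have e : t1 = c1 by apply: (third_qubit_unique ct2 _ _ n3 n4); rewrite eq_sym.
by rewrite e eqxx in ct1.
Qed.

Section KroneckerProduct.
Variable F : comNzRingType.

Lemma tensmxDl m n p q (A1 A2 : 'M[F]_(m, n)) (B : 'M[F]_(p, q)) :
  (A1 + A2) *t B = A1 *t B + A2 *t B.
Proof. by apply/matrixP=> i j; rewrite !mxE mulrDl. Qed.

Lemma tensmxDr m n p q (A : 'M[F]_(m, n)) (B1 B2 : 'M[F]_(p, q)) :
  A *t (B1 + B2) = A *t B1 + A *t B2.
Proof. by apply/matrixP=> i j; rewrite !mxE mulrDr. Qed.

Lemma tensmxZl m n p q c (A : 'M[F]_(m, n)) (B : 'M[F]_(p, q)) :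
  (c *: A) *t B = c *: (A *t B).
Proof. by apply/matrixP=> i j; rewrite !mxE mulrA. Qed.

Lemma tensmxZr m n p q c (A : 'M[F]_(m, n)) (B : 'M[F]_(p, q)) :
  A *t (c *: B) = c *: (A *t B).
Proof. by apply/matrixP=> i j; rewrite !mxE mulrCA. Qed.

Lemma mxtrace_tens m n (A : 'M[F]_m) (B : 'M[F]_n) : \tr (A *t B) = \tr A * \tr B.
Proof. by rewrite /mxtrace mulr_sum; apply: eq_bigr => i _; rewrite !mxE. Qed.

Lemma tens1mx1 m n : (1%:M : 'M[F]_m) *t (1%:M : 'M[F]_n) = 1%:M.
Proof.
apply/matrixP=> i j.
case: (mxtens_indexP i) => i1 i2; case: (mxtens_indexP j) => j1 j2.
rewrite tensmxE !mxE (inj_eq (can_inj (@mxtens_indexK _ _))) xpair_eqE.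
by case: (i1 == j1); case: (i2 == j2); rewrite /= ?mulr1 ?mulr0 ?mul0r.
Qed.

End KroneckerProduct.

Section ThreeQubits.
Variable R : realType.
Local Notation C := (complex R).
Local Notation M2 := 'M[C]_2.
Local Notation M8 := 'M[C]_(2 * 2 * 2).

Definition tensf (x : 'I_3 -> M2) : M8 := tens3 (x 0) (x 1) (x 2%:R).

Lemma tens3_tensf (A B D : M2) :
  tens3 A B D = tensf (fun i => if i == 0 then A else if i == 1 then B else D).
Proof. by []. Qed.

Lemma eq_tensf (x y : 'I_3 -> M2) : (forall i, x i = y i) -> tensf x = tensf y.
Proof. by move=> exy; rewrite /tensf !exy. Qed.

Lemma tensf_mul (x y : 'I_3 -> M2) : tensf x *m tensf y = tensf (fun i => x i *m y i).
Proof. by rewrite /tensf /tens3 !tensmx_mul. Qed.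

Lemma mxtrace_tensf (x : 'I_3 -> M2) : \tr (tensf x) = \prod_(i < 3) \tr (x i).
Proof. by rewrite prod3 /tensf /tens3 !mxtrace_tens. Qed.

Lemma tensf1 : tensf (fun _ => 1%:M) = 1%:M.
Proof. by rewrite /tensf /tens3 !tens1mx1. Qed.

Definition upd (x : 'I_3 -> M2) (i : 'I_3) (A : M2) : 'I_3 -> M2 :=
  fun j => if j == i then A else x j.

Lemma tensf_updD x i (A B : M2) :
  tensf (upd x i (A + B)) = tensf (upd x i A) + tensf (upd x i B).
Proof.
by rewrite /tensf /upd /tens3; case: (ord3P i) => ->; rewrite /= ?tensmxDr ?tensmxDl.
Qed.

Lemma tensf_updZ x i c (A : M2) : tensf (upd x i (c *: A)) = c *: tensf (upd x i A).
Proof.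
by rewrite /tensf /upd /tens3; case: (ord3P i) => ->; rewrite /= ?tensmxZr ?tensmxZl.
Qed.

Lemma tensf_upd_sum (I : finType) x i (F : I -> M2) :
  tensf (upd x i (\sum_j F j)) = \sum_j tensf (upd x i (F j)).
Proof.
apply: (big_morph (fun A => tensf (upd x i A))) => [A B|]; first exact: tensf_updD.
by rewrite -(scale0r 0) tensf_updZ scale0r.
Qed.

Definition op2 (k o : 'I_3) (A B : M2) : M8 :=
  tensf (fun i => if i == k then A else if i == o then B else 1%:M).

Lemma op2C k o (A B : M2) : k != o -> op2 k o A B = op2 o k B A.
Proof.
move=> ko; apply: eq_tensf => i.
by case: (eqVneq i k) => [->|//]; rewrite (negbTE ko).
Qed.

Lemma op2_suml (I : finType) k o (F : I -> M2) B :
  op2 k o (\sum_j F j) B = \sum_j op2 k o (F j) B.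
Proof. exact: tensf_upd_sum. Qed.

Lemma op2_sumr (I : finType) k o A (F : I -> M2) : k != o ->
  op2 k o A (\sum_j F j) = \sum_j op2 k o A (F j).
Proof.
by move=> ko; rewrite op2C // op2_suml; apply: eq_bigr => j _; rewrite op2C // eq_sym.
Qed.

Lemma op2Zl k o c (A B : M2) : op2 k o (c *: A) B = c *: op2 k o A B.
Proof. exact: tensf_updZ. Qed.

Lemma op2Zr k o c (A B : M2) : k != o -> op2 k o A (c *: B) = c *: op2 k o A B.
Proof. by move=> ko; rewrite !(op2C _ _ ko) op2Zl. Qed.

Lemma decomp_sum r (x : 'I_r -> 'I_3 -> M2) : tensor_decomp (\sum_(j < r) tensf (x j)) r.
Proof. by exists (fun j => x j 0), (fun j => x j 1), (fun j => x j 2%:R). Qed.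

Lemma decomp_local (P Q : 'I_3 -> M2) (U : M8) r :
  tensor_decomp U r -> tensor_decomp (tensf P *m U *m tensf Q) r.
Proof.
move=> [A [B [D ->]]]; rewrite mulmx_sumr mulmx_suml.
under eq_bigr do rewrite tens3_tensf !tensf_mul.
exact: decomp_sum.
Qed.

Lemma schmidt_rank_local (P Q : 'I_3 -> M2) (U : M8) r :
  (forall i, P i \in unitmx) -> (forall i, Q i \in unitmx) ->
  schmidt_rank_is U r -> schmidt_rank_is (tensf P *m U *m tensf Q) r.
Proof.
move=> uP uQ [dU minU]; split; first exact: decomp_local.
move=> r' /(decomp_local (fun i => invmx (P i)) (fun i => invmx (Q i))).
rewrite !mulmxA tensf_mul -mulmxA tensf_mul.
have -> : tensf (fun i => invmx (P i) *m P i) = 1%:M.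
  by rewrite -tensf1; apply: eq_tensf => i; rewrite mulVmx.
have -> : tensf (fun i => Q i *m invmx (Q i)) = 1%:M.
  by rewrite -tensf1; apply: eq_tensf => i; rewrite mulmxV.
by rewrite mul1mx mulmx1; apply: minU.
Qed.

Lemma mxtrace_pairing (Y : 'I_3 -> M2) k (X : M2) (x : 'I_3 -> M2) :
  \tr (tensf (upd Y k X) *m tensf x)
  = \tr (X *m x k) * \prod_(i < 3 | i != k) \tr (Y i *m x i).
Proof.
rewrite tensf_mul mxtrace_tensf (bigD1 k) //= /upd eqxx; congr (_ * _).
by apply: eq_bigr => i /negbTE ->.
Qed.

(* Flattening lower bound: if pairing [U] against [m] row tests [X p] on qubit
   [k] and [m] column tests [Y q] on the other qubits gives an invertible
   [m x m] matrix, then every decomposition of [U] has at least [m] terms,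
   since that matrix factors through the number of terms. *)
Lemma flattening_bound (U : M8) m (X : 'I_m -> M2) (Y : 'I_m -> 'I_3 -> M2) k r :
  \matrix_(p, q) \tr (tensf (upd (Y q) k (X p)) *m U) \in unitmx ->
  tensor_decomp U r -> (m <= r)%N.
Proof.
move=> unitT [A [B [D EU]]]; rewrite EU in unitT.
pose a (j : 'I_r) (i : 'I_3) := if i == 0 then A j else if i == 1 then B j else D j.
pose Xm : 'M[C]_(m, r) := \matrix_(p, j) \tr (X p *m a j k).
pose Ym : 'M[C]_(r, m) := \matrix_(j, q) \prod_(i < 3 | i != k) \tr (Y q i *m a j i).
have factorT : \matrix_(p, q) \tr (tensf (upd (Y q) k (X p)) *m
            \sum_(j < r) tens3 (A j) (B j) (D j)) = Xm *m Ym.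
  apply/matrixP => p q; rewrite !mxE mulmx_sumr raddf_sum.
  by apply: eq_bigr => j _ /=; rewrite tens3_tensf mxtrace_pairing !mxE.
move: unitT; rewrite factorT => /mxrank_unit <-.
exact: leq_trans (mxrankM_maxl _ _) (rank_leq_col _).
Qed.

Lemma prod_other_two (h : 'I_3 -> C) k a b : k != a -> k != b -> a != b ->
  \prod_(i < 3 | i != k) h i = h a * h b.
Proof.
move=> ka kb ab; rewrite big_mkcond prod3.
case: (ord3P k) => Ek; case: (ord3P a) => Ea; case: (ord3P b) => Eb;
  rewrite Ek Ea Eb in ka kb ab *; rewrite //= ?mul1r ?mulr1 //; exact: mulrC.
Qed.

Local Notation i0 := (@ord0 1).
Local Notation i1 := (@ord_max 1).

Ltac mx2_cases := apply/matrixP;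
  let i := fresh "i" in let j := fresh "j" in move=> i j;
  case: (ord2P i) => ->; case: (ord2P j) => ->; rewrite ?(mxE, sum2) /=.

(* [sg a c = (-1)^(a c)]: the signs of the (unnormalised) Hadamard matrix. *)
Definition sg (a c : 'I_2) : C := if (a == i1) && (c == i1) then -1 else 1.

Lemma sgC a c : sg a c = sg c a.
Proof. by rewrite /sg andbC. Qed.

Lemma sg_sqr a c : sg a c * sg a c = 1.
Proof. by rewrite /sg; case: ifP; rewrite ?mulrNN mulr1. Qed.

Definition Pm (a : 'I_2) : M2 := delta_mx a a.
Definition Zm (a : 'I_2) : M2 := diag_mx (\row_c sg a c).
Definition Hm : M2 := \matrix_(i, j) sg i j.
Definition Hinv : M2 := 2^-1 *: Hm.

Lemma Zm_proj a : Zm a = \sum_(c < 2) sg a c *: Pm c.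
Proof. by mx2_cases; case: (ord2P a) => ->; rewrite /sg /=; ring. Qed.

Lemma ZmMZm a b (W : M2) c d : (Zm a *m W *m Zm b) c d = sg a c * W c d * sg b d.
Proof. by rewrite /Zm mul_mx_diag mul_diag_mx !mxE. Qed.

Definition cz (k o : 'I_3) : M8 := \sum_(a < 2) op2 k o (Pm a) (Zm a).

Lemma czC k o : k != o -> cz k o = cz o k.
Proof.
move=> ko.
have expand k' o' : k' != o' ->
    cz k' o' = \sum_(a < 2) \sum_(c < 2) sg a c *: op2 k' o' (Pm a) (Pm c).
  move=> ne; apply: eq_bigr => a _; rewrite Zm_proj op2_sumr //.
  by apply: eq_bigr => c _; apply: op2Zr.
rewrite (expand k o ko) (expand o k); last by rewrite eq_sym.
rewrite exchange_big; apply: eq_bigr => a _; apply: eq_bigr => c _.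
by rewrite op2C // sgC.
Qed.

Definition on_qubit (i : 'I_3) (A : M2) : 'I_3 -> M2 := upd (fun _ => 1%:M) i A.

Lemma cnot_cz c t : c != t ->
  cnot3 c t = tensf (on_qubit t Hm) *m cz c t *m tensf (on_qubit t Hinv).
Proof.
move=> ct.
have -> : cnot3 c t = tensf (fun i => if i == c then proj0 else 1%:M)
    + tensf (fun i => if i == c then proj1 else if i == t then sigma1 else 1%:M) by [].
rewrite /cz mulmx_sumr mulmx_suml sum2 /op2 !tensf_mul.
have [HZ0 HZ1] : Hm *m Zm i0 *m Hinv = 1%:M /\ Hm *m Zm i1 *m Hinv = sigma1.
  by split; mx2_cases; rewrite /sg /=; field.
have [P0 P1] : proj0 = Pm i0 /\ proj1 = Pm i1 by split; mx2_cases.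
congr (_ + _); apply: eq_tensf => i; rewrite /on_qubit /upd.
- case: (eqVneq i c) => [->|_]; first by rewrite (negbTE ct) mul1mx mulmx1 P0.
  by case: (i == t); rewrite ?mulmx1 ?HZ0 // mulmx1.
- case: (eqVneq i c) => [->|_]; first by rewrite (negbTE ct) mul1mx mulmx1 P1.
  by case: (i == t); rewrite ?mulmx1 ?HZ1 // mulmx1.
Qed.

Definition scaled_unitary (X : M2) := exists2 a : C, a != 0 & X *m adjoint2 X = a%:M.

Lemma adjoint2M (A B : M2) : adjoint2 (A *m B) = adjoint2 B *m adjoint2 A.
Proof.
rewrite /adjoint2 -trmx_mul; congr (_^T); apply/matrixP => i j.
by rewrite !mxE !sum2 !mxE rmorphD !rmorphM.
Qed.

Lemma scaled_unitaryM (A B : M2) :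
  scaled_unitary A -> scaled_unitary B -> scaled_unitary (A *m B).
Proof.
move=> [a a0 hA] [b b0 hB]; exists (b * a); first by rewrite mulf_neq0.
rewrite adjoint2M mulmxA -(mulmxA A) hB mul_mx_scalar -scalemxAl hA.
by rewrite scale_scalar_mx.
Qed.

Lemma unitary_scaled (V : M2) : unitary2 V -> scaled_unitary V.
Proof. by move=> hV; exists 1; rewrite ?oner_neq0. Qed.

Lemma scaled_unitary_unit (X : M2) : scaled_unitary X -> X \in unitmx.
Proof.
move=> [a a0 hX]; have /mulmx1_unit[] // : X *m (a^-1 *: adjoint2 X) = 1%:M.
by rewrite -scalemxAr hX scale_scalar_mx mulVf.
Qed.

Lemma scaled_unitary_Hm : scaled_unitary Hm.
Proof.
exists 2%:R; first by rewrite pnatr_eq0.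
rewrite /adjoint2; mx2_cases; rewrite ?mxE /sg /= ?rmorphN ?rmorph1 ?rmorph0; ring.
Qed.

Lemma scaled_unitary_Hinv : scaled_unitary Hinv.
Proof.
exists (2%:R^-1); first by rewrite invr_eq0 pnatr_eq0.
rewrite /adjoint2 /Hinv; mx2_cases; rewrite ?mxE /sg /=
  ?rmorphM ?fmorphV ?rmorphN ?rmorph1 ?rmorph0 ?rmorph_nat; by field.
Qed.

Lemma scaled_unitary_on_qubit i (A : M2) :
  scaled_unitary A -> forall j, scaled_unitary (on_qubit i A j).
Proof.
move=> sA j; rewrite /on_qubit /upd; case: (j == i) => //.
by apply: unitary_scaled; rewrite /unitary2 /adjoint2 mul1mx map_mx1 trmx1.
Qed.

Lemma cnot_cz_at c t k : c != t -> (k == c) || (k == t) ->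
  exists2 o, k != o & exists N N' : 'I_3 -> M2,
    [/\ forall i, scaled_unitary (N i), forall i, scaled_unitary (N' i)
      & cnot3 c t = tensf N *m cz k o *m tensf N'].
Proof.
move=> ct kct.
have [o ko czE] : exists2 o, k != o & cz c t = cz k o.
  case/orP: kct => /eqP->; first by exists t.
  by exists c; [rewrite eq_sym | rewrite czC].
exists o => //; exists (on_qubit t Hm), (on_qubit t Hinv); split.
- exact: scaled_unitary_on_qubit scaled_unitary_Hm.
- exact: scaled_unitary_on_qubit scaled_unitary_Hinv.
by rewrite cnot_cz // czE.
Qed.

Definition coef (u : M2) (x : 'I_2 * 'I_2) : C := u x.1 x.2.

Definition support_is (u : M2) m (s : 'I_m -> 'I_2 * 'I_2) :=
  [/\ injective s, forall x, coef u x != 0 -> exists j, x = s j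
    & forall j, coef u (s j) != 0].

Definition all4 (j : 'I_4) := nth (i0, i0) [:: (i0, i0); (i0, i1); (i1, i0); (i1, i1)] j.
Definition diag2 (j : 'I_2) := nth (i0, i0) [:: (i0, i0); (i1, i1)] j.
Definition anti2 (j : 'I_2) := nth (i0, i0) [:: (i0, i1); (i1, i0)] j.

Ltac pair_cases x := let a := fresh "a" in let b := fresh "b" in
  case: x => a b; case: (ord2P a) => ->; case: (ord2P b) => ->.

Lemma scaled_unitary_shape (u : M2) : scaled_unitary u ->
  [\/ forall a b, u a b != 0,
      [/\ u i0 i1 = 0, u i1 i0 = 0, u i0 i0 != 0 & u i1 i1 != 0]
    | [/\ u i0 i0 = 0, u i1 i1 = 0, u i0 i1 != 0 & u i1 i0 != 0]].
Proof.
move=> [c c0 hu].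
have rows i j : u i i0 * (u j i0)^* + u i i1 * (u j i1)^* = c *+ (i == j).
  by have := congr1 (fun M : M2 => M i j) hu; rewrite /adjoint2 !mxE sum2 !mxE.
have e00 := rows i0 i0; have e01 := rows i0 i1.
have e10 := rows i1 i0; have e11 := rows i1 i1.
rewrite /= mulr1n in e00 e11; rewrite /= mulr0n in e01 e10.
have zero_conj (x y : C) : y != 0 -> y * x^* = 0 -> x = 0.
  by move=> y0 /eqP; rewrite mulf_eq0 (negbTE y0) conjC_eq0 => /eqP.
have nz_row (x y : C) : x * x^* + y * y^* = c -> x = 0 -> y != 0.
  by move=> exy x0; apply: contraNneq c0 => y0; rewrite -exy x0 y0 !mul0r addr0.
case: (eqVneq (u i0 i0) 0) => [z00|n00].
  have n01 := nz_row _ _ e00 z00.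
  have z11 : u i1 i1 = 0 by move: e01; rewrite z00 mul0r add0r; exact: zero_conj n01.
  have n10 := nz_row _ _ (etrans (addrC _ _) e11) z11.
  by apply: Or33; split.
case: (eqVneq (u i0 i1) 0) => [z01|n01].
  have z10 : u i1 i0 = 0 by move: e01; rewrite z01 mul0r addr0; exact: zero_conj n00.
  have n11 := nz_row _ _ e11 z10.
  by apply: Or32; split.
case: (eqVneq (u i1 i0) 0) => [z10|n10].
  have z11 : u i1 i1 = 0 by move: e01; rewrite z10 conjC0 mulr0 add0r; exact: zero_conj n01.
  by have := nz_row _ _ e11 z10; rewrite z11 eqxx.
case: (eqVneq (u i1 i1) 0) => [z11|n11].
  have z00 : u i0 i0 = 0 by move: e10; rewrite z11 mul0r addr0; exact: zero_conj n10.
  by rewrite z00 eqxx in n00.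
by apply: Or31 => a b; case: (ord2P a) => ->; case: (ord2P b) => ->.
Qed.

Lemma full_support (u : M2) : (forall x, coef u x != 0) -> support_is u all4.
Proof.
move=> nz; split=> [p q||j]; last exact: nz.
  by case: (ord4P p) => ->; case: (ord4P q) => -> // [].
move=> x _; pair_cases x.
- by exists (Ordinal (isT : 0 < 4)%N).
- by exists (Ordinal (isT : 1 < 4)%N).
- by exists (Ordinal (isT : 2 < 4)%N).
- by exists (Ordinal (isT : 3 < 4)%N).
Qed.

Definition sparse (u : M2) := support_is u diag2 \/ support_is u anti2.

Lemma scaled_unitary_support (u : M2) : scaled_unitary u ->
  (forall x, coef u x != 0) \/ sparse u.
Proof.
case/scaled_unitary_shape => [nz|[z01 z10 n00 n11]|[z00 z11 n01 n10]].
- by left => x; apply: nz.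
- right; left; split.
  + by move=> p q; case: (ord2P p) => ->; case: (ord2P q) => -> // [].
  + move=> x; pair_cases x; rewrite /coef /= ?z01 ?z10 ?eqxx // => _.
    * by exists i0.
    * by exists i1.
  + by move=> j; case: (ord2P j) => ->.
- right; right; split.
  + by move=> p q; case: (ord2P p) => ->; case: (ord2P q) => -> // [].
  + move=> x; pair_cases x; rewrite /coef /= ?z00 ?z11 ?eqxx // => _.
    * by exists i0.
    * by exists i1.
  + by move=> j; case: (ord2P j) => ->.
Qed.

Lemma sum_delta (T : finType) (y : T) (f : T -> C) : \sum_x (y == x)%:R * f x = f y.
Proof.
rewrite (bigD1 y) //= eqxx mul1r big1 ?addr0 // => x.
by rewrite eq_sym => /negbTE->; rewrite mul0r.
Qed.

Lemma support_expand (T : finType) (V : zmodType) m (s : 'I_m -> T) (f : T -> V) x :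
  injective s -> (f x != 0 -> exists j, x = s j) -> f x = \sum_(j < m) f (s j) *+ (x == s j).
Proof.
move=> inj_s supp; case: (eqVneq (f x) 0) => [fx0|/supp [j0 ->]].
  rewrite fx0 big1 // => j _.
  by case: (eqVneq x (s j)) => [<-|_]; rewrite ?fx0 ?mul0rn ?mulr0n.
rewrite (bigD1 j0) //= eqxx big1 ?addr0 // => j /negbTE nj.
by rewrite (inj_eq inj_s) eq_sym nj.
Qed.

Lemma sum_support (T : finType) (V : zmodType) m (s : 'I_m -> T) (f : T -> V) :
  injective s -> (forall x, f x != 0 -> exists j, x = s j) ->
  \sum_x f x = \sum_(j < m) f (s j).
Proof.
move=> inj_s supp; rewrite (eq_bigr _ (fun x _ => support_expand inj_s (supp x))).
rewrite exchange_big; apply: eq_bigr => j _.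
by rewrite (bigD1 (s j)) //= eqxx big1 ?addr0 // => x /negbTE->.
Qed.

Definition Emx (x : 'I_2 * 'I_2) : M2 := delta_mx x.1 x.2.
Definition Etr (x : 'I_2 * 'I_2) : M2 := delta_mx x.2 x.1.

Lemma mxtrace_Emx x y : \tr (Etr x *m Emx y) = (x == y)%:R.
Proof.
rewrite /mxtrace sum2 !mxE !sum2 !mxE; move: x y => [a b] [c d].
by case: (ord2P a) => ->; case: (ord2P b) => ->; case: (ord2P c) => ->;
  case: (ord2P d) => ->; rewrite /= ?mulr0 ?mul0r ?mulr1 ?addr0 ?add0r.
Qed.

Lemma PmMPm_Emx (u : M2) a b : Pm a *m u *m Pm b = coef u (a, b) *: Emx (a, b).
Proof.
apply/matrixP => i j; rewrite !mxE !sum2 !mxE !sum2 !mxE.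
by case: (ord2P i) => ->; case: (ord2P j) => ->; case: (ord2P a) => ->;
  case: (ord2P b) => ->; rewrite /= ?mulr0 ?mul0r ?mulr1 ?mul1r ?addr0 ?add0r.
Qed.

(* The normalised identity serves as test operator on an idle qubit. *)
Lemma mxtrace_half1 : \tr ((2^-1 *: 1%:M : M2) *m 1%:M) = 1.
Proof. by rewrite mulmx1 mxtraceZ mxtrace1 mulVf // pnatr_eq0. Qed.

Definition Ksum (k o : 'I_3) (K : 'I_2 * 'I_2 -> 'I_2 * 'I_2 -> C) : M8 :=
  \sum_x \sum_y K x y *: op2 k o (Emx x) (Emx y).

Lemma Ksum_decomp k o m K (al be : 'I_m -> 'I_2 * 'I_2 -> C) : k != o ->
  (forall x y, K x y = \sum_(j < m) al j x * be j y) -> tensor_decomp (Ksum k o K) m.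
Proof.
move=> ko factorK.
suff -> : Ksum k o K = \sum_(j < m) op2 k o (\sum_x al j x *: Emx x) (\sum_y be j y *: Emx y).
  exact: decomp_sum.
have expand j : op2 k o (\sum_x al j x *: Emx x) (\sum_y be j y *: Emx y)
    = \sum_x \sum_y (al j x * be j y) *: op2 k o (Emx x) (Emx y).
  rewrite op2_suml; apply: eq_bigr => x _; rewrite op2Zl op2_sumr // scaler_sumr.
  by apply: eq_bigr => y _; rewrite op2Zr // scalerA.
rewrite (eq_bigr _ (fun j _ => expand j)) /Ksum [RHS]exchange_big.
apply: eq_bigr => x _; rewrite [RHS]exchange_big.
by apply: eq_bigr => y _; rewrite factorK scaler_suml.
Qed.

Lemma Ksum_pairing k o z K x y : k != o -> k != z -> o != z ->
  \tr (tensf (upd (fun i => if i == o then Etr y else 2^-1 *: 1%:M) k (Etr x)) *m Ksum k o K)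
  = K x y.
Proof.
move=> ko kz oz; have ok : (o == k) = false by rewrite eq_sym (negbTE ko).
have zk : (z == k) = false by rewrite eq_sym (negbTE kz).
have zo : (z == o) = false by rewrite eq_sym (negbTE oz).
rewrite /Ksum mulmx_sumr raddf_sum /= -(sum_delta x (fun x' => K x' y)).
apply: eq_bigr => x' _; rewrite mulmx_sumr raddf_sum /= -sum_delta mulr_sumr.
apply: eq_bigr => y' _; rewrite -scalemxAr mxtraceZ /op2 mxtrace_pairing.
rewrite (prod_other_two _ ko kz oz) /= !eqxx ok zk zo mxtrace_half1 !mxtrace_Emx.
by rewrite mulr1 mulrC -mulrA.
Qed.

(* The Schmidt rank of [Ksum k o K] is the rank of the coefficient matrix,
   as witnessed by a factorisation and an invertible square submatrix. *)
Lemma Ksum_rank k o m K (al be : 'I_m -> 'I_2 * 'I_2 -> C) (s t : 'I_m -> 'I_2 * 'I_2) :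
  k != o -> (forall x y, K x y = \sum_(j < m) al j x * be j y) ->
  \matrix_(p, q) K (s p) (t q) \in unitmx -> schmidt_rank_is (Ksum k o K) m.
Proof.
move=> ko factorK unitK; split; first exact: Ksum_decomp factorK.
have [z kz oz] := third_qubit ko.
move=> r; apply: (@flattening_bound _ m (fun p => Etr (s p))
  (fun q i => if i == o then Etr (t q) else 2^-1 *: 1%:M) k).
suff -> : \matrix_(p, q) \tr (tensf (upd (fun i => if i == o then Etr (t q)
              else 2^-1 *: 1%:M) k (Etr (s p))) *m Ksum k o K) = \matrix_(p, q) K (s p) (t q).
  by [].
by apply/matrixP => p q; rewrite !mxE (Ksum_pairing _ _ _ ko kz oz).
Qed.

(* The coefficients of [\sum_(a, b) op2 k o (Pm a *m u *m Pm b) (Zm a *m W *m Zm b)]: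
   entries of [u] and [W] twisted by the Hadamard signs [sgp]. *)
Definition sgp (x y : 'I_2 * 'I_2) : C := sg x.1 y.1 * sg x.2 y.2.
Definition czK (u W : M2) (x y : 'I_2 * 'I_2) : C := coef u x * coef W y * sgp x y.
Definition Sgm m (s t : 'I_m -> 'I_2 * 'I_2) : 'M[C]_m := \matrix_(p, q) sgp (s p) (t q).

Lemma sgp_sqr x y : sgp x y * sgp x y = 1.
Proof. by rewrite /sgp mulrACA !sg_sqr mulr1. Qed.

Lemma czK_test_unit m (s t : 'I_m -> 'I_2 * 'I_2) (u W : M2) :
  (forall p, coef u (s p) != 0) -> (forall q, coef W (t q) != 0) ->
  Sgm s t *m (Sgm s t)^T = m%:R *: 1%:M -> (0 < m)%N ->
  \matrix_(p, q) czK u W (s p) (t q) \in unitmx.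
Proof.
move=> nz_u nz_W orthoS m_gt0.
have -> : \matrix_(p, q) czK u W (s p) (t q) =
    diag_mx (\row_p coef u (s p)) *m Sgm s t *m diag_mx (\row_q coef W (t q)).
  by apply/matrixP => p q; rewrite mul_mx_diag mul_diag_mx !mxE /czK mulrAC.
have diag_unit (d : 'rV[C]_m) : (forall i, d 0 i != 0) -> diag_mx d \in unitmx.
  by move=> nz_d; rewrite unitmxE det_diag unitfE; apply/prodf_neq0 => i _.
rewrite !unitmx_mul !diag_unit ?andbT => [|q|p]; rewrite ?mxE //.
have /mulmx1_unit[] // : Sgm s t *m (m%:R^-1 *: (Sgm s t)^T) = 1%:M.
by rewrite -scalemxAr orthoS scalerA mulVf ?scale1r // pnatr_eq0 -lt0n.
Qed.

Ltac sign_matrix_cases := apply/matrixP;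
  let p := fresh "p" in let q := fresh "q" in move=> p q;
  rewrite !mxE ?sum2 ?sum4 !mxE;
  first [case: (ord2P p) => ->; case: (ord2P q) => ->
        | case: (ord4P p) => ->; case: (ord4P q) => ->];
  rewrite /sgp /sg /=; ring.

Lemma czK_rank_u k o m (s t : 'I_m -> 'I_2 * 'I_2) (u W : M2) :
  k != o -> support_is u s -> (forall q, coef W (t q) != 0) ->
  Sgm s t *m (Sgm s t)^T = m%:R *: 1%:M -> (0 < m)%N ->
  schmidt_rank_is (Ksum k o (czK u W)) m.
Proof.
move=> ko [inj_s supp nz_s] nz_t orthoS m_gt0.
apply: (Ksum_rank (al := fun j x => coef u (s j) * (x == s j)%:R)
  (be := fun j y => coef W y * sgp (s j) y) (s := s) (t := t) ko).
  move=> x y; rewrite (@support_expand _ _ _ s (fun x => czK u W x y) x inj_s).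
    by apply: eq_bigr => j _; rewrite -mulr_natr /czK; ring.
  by move=> nz; apply: supp; apply: contraNneq nz; rewrite /czK => ->; rewrite !mul0r.
exact: czK_test_unit.
Qed.

Lemma czK_rank_W k o m (s t : 'I_m -> 'I_2 * 'I_2) (u W : M2) :
  k != o -> (forall p, coef u (s p) != 0) -> support_is W t ->
  Sgm s t *m (Sgm s t)^T = m%:R *: 1%:M -> (0 < m)%N ->
  schmidt_rank_is (Ksum k o (czK u W)) m.
Proof.
move=> ko nz_s [inj_t supp nz_t] orthoS m_gt0.
apply: (Ksum_rank (al := fun j x => coef u x * sgp x (t j))
  (be := fun j y => coef W (t j) * (y == t j)%:R) (s := s) (t := t) ko).
  move=> x y; rewrite (@support_expand _ _ _ t (fun y => czK u W x y) y inj_t).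
    by apply: eq_bigr => j _; rewrite -mulr_natr /czK; ring.
  by move=> nz; apply: supp; apply: contraNneq nz; rewrite /czK => ->; rewrite mulr0 mul0r.
exact: czK_test_unit.
Qed.

Lemma czK_rank_one k o (u W : M2) (al be : 'I_2 * 'I_2 -> C) x0 y0 :
  k != o -> (forall x y, czK u W x y = al x * be y) ->
  coef u x0 != 0 -> coef W y0 != 0 -> schmidt_rank_is (Ksum k o (czK u W)) 1.
Proof.
move=> ko factorK nz_x0 nz_y0.
apply: (Ksum_rank (al := fun _ => al) (be := fun _ => be)
  (s := fun _ => x0) (t := fun _ => y0) ko).
  by move=> x y; rewrite big_ord1.
apply: czK_test_unit => //; apply/matrixP => p q.
by rewrite !mxE big_ord1 !mxE sgp_sqr (ord1 p) (ord1 q) eqxx mulr1.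
Qed.

Lemma support_zero (u : M2) m (s : 'I_m -> 'I_2 * 'I_2) x :
  support_is u s -> (forall j, x != s j) -> coef u x = 0.
Proof.
case=> _ supp _ x_out; apply/eqP/negPn/negP => /supp [j xj].
by have := x_out j; rewrite xj eqxx.
Qed.

Lemma diag2_zeros (u : M2) : support_is u diag2 -> u i0 i1 = 0 /\ u i1 i0 = 0.
Proof.
by move=> su; split; [apply: (support_zero (x := (i0, i1)) su)
  | apply: (support_zero (x := (i1, i0)) su)] => j; case: (ord2P j) => ->.
Qed.

Lemma anti2_zeros (u : M2) : support_is u anti2 -> u i0 i0 = 0 /\ u i1 i1 = 0.
Proof.
by move=> su; split; [apply: (support_zero (x := (i0, i0)) su)
  | apply: (support_zero (x := (i1, i1)) su)] => j; case: (ord2P j) => ->.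
Qed.

Lemma sparse_nonzero (u : M2) : sparse u -> exists x, coef u x != 0.
Proof. by case=> -[_ _ nz]; eexists; apply: (nz i0). Qed.

(* When [u] and [W] are both diagonal or antidiagonal, the signs [sgp x y]
   split on their supports and the coefficients factor: rank one. *)
Lemma czK_rank_sparse k o (u W : M2) : k != o -> sparse u -> sparse W ->
  schmidt_rank_is (Ksum k o (czK u W)) 1.
Proof.
move=> ko su sW; have [x0 nz_u] := sparse_nonzero su; have [y0 nz_W] := sparse_nonzero sW.
suff [al [be factorK]] : exists al be, forall x y, czK u W x y = al x * be y.
  exact: (czK_rank_one ko factorK nz_u nz_W).
case: su => [/diag2_zeros|/anti2_zeros] [u1 u2]; case: sW => [/diag2_zeros|/anti2_zeros] [w1 w2].
- exists (coef u), (coef W).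
  by move=> x y; pair_cases x; pair_cases y; rewrite /czK /coef /sgp /sg /= ?u1 ?u2 ?w1 ?w2; ring.
- exists (fun x => coef u x * sg x.1 i1), (coef W).
  by move=> x y; pair_cases x; pair_cases y; rewrite /czK /coef /sgp /sg /= ?u1 ?u2 ?w1 ?w2; ring.
- exists (coef u), (fun y => coef W y * sg y.1 i1).
  by move=> x y; pair_cases x; pair_cases y; rewrite /czK /coef /sgp /sg /= ?u1 ?u2 ?w1 ?w2; ring.
- exists (fun x => coef u x * sg x.2 i1), (fun y => coef W y * sg y.1 i1).
  by move=> x y; pair_cases x; pair_cases y; rewrite /czK /coef /sgp /sg /= ?u1 ?u2 ?w1 ?w2; ring.
Qed.

Definition row0 (j : 'I_2) : 'I_2 * 'I_2 := (i0, j).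

Lemma czK_rank_cases k o (u W : M2) : k != o -> scaled_unitary u -> scaled_unitary W ->
  exists r, schmidt_rank_is (Ksum k o (czK u W)) r /\ r \in [:: 1; 2; 4]%N.
Proof.
move=> ko /scaled_unitary_support[fu|su] /scaled_unitary_support[fW|sW].
- exists 4%N; split=> //; apply: (czK_rank_u (t := all4) ko (full_support fu));
    [by move=> q; apply: fW | by sign_matrix_cases | by []].
- exists 2%N; split=> //; case: sW => sW; apply: (czK_rank_W (s := row0) ko _ sW);
    by [move=> p; apply: fu | sign_matrix_cases | ].
- exists 2%N; split=> //; case: su => su; apply: (czK_rank_u (t := row0) ko su);
    by [move=> q; apply: fW | sign_matrix_cases | ].
- by exists 1%N; split=> //; apply: czK_rank_sparse.
Qed.

Definition zz_family (o : 'I_3) (x : 'I_2 * 'I_2) : 'I_3 -> M2 :=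
  fun i => if i == o then Zm x.1 else Zm x.2.

Definition T2sum (k o : 'I_3) (u : M2) : M8 :=
  \sum_x tensf (upd (zz_family o x) k (coef u x *: Emx x)).

Lemma mxtrace_halfZm c a : \tr ((2^-1 *: Zm c) *m Zm a) = (c == a)%:R.
Proof.
rewrite /mxtrace sum2 !mxE !sum2 !mxE.
by case: (ord2P c) => ->; case: (ord2P a) => ->; rewrite /sg /=; field.
Qed.

(* Its Schmidt rank is the number of nonzero entries of [u]: the products
   [Zm a (x) Zm b] are linearly independent. *)
Lemma T2sum_rank k o m (s : 'I_m -> 'I_2 * 'I_2) (u : M2) :
  k != o -> support_is u s -> schmidt_rank_is (T2sum k o u) m.
Proof.
move=> ko [inj_s supp nz_s]; split.
  rewrite /T2sum (sum_support inj_s); first exact: decomp_sum.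
  move=> x nz; apply: supp; apply: contraNneq nz => ux0.
  by rewrite ux0 tensf_updZ scale0r.
have [z kz oz] := third_qubit ko; move=> r.
pose Y q i := 2^-1 *: zz_family o (s q) i.
apply: (@flattening_bound _ m (fun p => Etr (s p)) Y k).
suff -> : \matrix_(p, q) \tr (tensf (upd (Y q) k (Etr (s p))) *m T2sum k o u)
    = diag_mx (\row_p coef u (s p)).
  rewrite unitmxE det_diag unitfE; apply/prodf_neq0 => p _; rewrite mxE; exact: nz_s.
have ok : (o == k) = false by rewrite eq_sym (negbTE ko).
have zk : (z == k) = false by rewrite eq_sym (negbTE kz).
have zo : (z == o) = false by rewrite eq_sym (negbTE oz).
apply/matrixP => p q; rewrite !mxE /T2sum mulmx_sumr raddf_sum /=.
rewrite (eq_bigr (fun x => (s p == x)%:R * (coef u x * (s q == x)%:R))).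
  by rewrite sum_delta (inj_eq inj_s) eq_sym mulr_natr.
move=> x _; rewrite mxtrace_pairing (prod_other_two _ ko kz oz) /upd /Y /zz_family.
rewrite ok zk zo !eqxx -scalemxAr mxtraceZ !mxtrace_halfZm mxtrace_Emx.
by case: x => a b; case: (s q) => c d; rewrite xpair_eqE /= -mulnb natrM; ring.
Qed.

Lemma T2sum_rank_cases k o (u : M2) : k != o -> scaled_unitary u ->
  exists r, schmidt_rank_is (T2sum k o u) r /\ r \in [:: 1; 2; 4]%N.
Proof.
move=> ko /scaled_unitary_support[fu|[su|su]].
- by exists 4%N; split=> //; apply: T2sum_rank ko (full_support fu).
- by exists 2%N; split=> //; apply: T2sum_rank ko su.
- by exists 2%N; split=> //; apply: T2sum_rank ko su.
Qed.

Definition cz_factor (k o : 'I_3) (a : 'I_2) : 'I_3 -> M2 :=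
  fun i => if i == k then Pm a else if i == o then Zm a else 1%:M.

Lemma cz_sandwich k o1 o2 (W : 'I_3 -> M2) :
  cz k o1 *m tensf W *m cz k o2
  = \sum_x tensf (fun i => cz_factor k o1 x.1 i *m W i *m cz_factor k o2 x.2 i).
Proof.
rewrite -(pair_bigA _ (fun a b =>
  tensf (fun i => cz_factor k o1 a i *m W i *m cz_factor k o2 b i))) /cz !mulmx_suml.
apply: eq_bigr => a _.
by rewrite mulmx_sumr; apply: eq_bigr => b _; rewrite /op2 !tensf_mul.
Qed.

Lemma sandwich_Ksum k o (u W : M2) : k != o ->
  \sum_x op2 k o (Pm x.1 *m u *m Pm x.2) (Zm x.1 *m W *m Zm x.2) = Ksum k o (czK u W).
Proof.
move=> ko; apply: eq_bigr => -[a b] _ /=.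
rewrite PmMPm_Emx op2Zl {1}[Zm a *m W *m Zm b]matrix_sum_delta.
rewrite (pair_bigA _ (fun c d => (Zm a *m W *m Zm b) c d *: delta_mx c d)) /=.
rewrite op2_sumr // scaler_sumr; apply: eq_bigr => -[c d] _ /=.
by rewrite op2Zr // scalerA ZmMZm /czK /sgp /coef /=; congr (_ *: _); ring.
Qed.

Lemma sandwich_same k o z (W : 'I_3 -> M2) : k != o -> k != z -> o != z ->
  cz k o *m tensf W *m cz k o
  = tensf (on_qubit z (W z)) *m Ksum k o (czK (W k) (W o)) *m tensf (fun _ => 1%:M).
Proof.
move=> ko kz oz; rewrite tensf1 mulmx1 -sandwich_Ksum // cz_sandwich mulmx_sumr.
apply: eq_bigr => x _; rewrite /op2 tensf_mul; apply: eq_tensf => i.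
rewrite /cz_factor /on_qubit /upd.
case: (eqVneq i k) => [->|ik]; first by rewrite (negbTE kz) mul1mx.
case: (eqVneq i o) => [->|io]; first by rewrite (negbTE oz) mul1mx.
by rewrite (third_qubit_unique ko kz oz ik io) eqxx !mulmx1 mul1mx.
Qed.

Lemma sandwich_diff k o1 o2 (W : 'I_3 -> M2) : k != o1 -> k != o2 -> o1 != o2 ->
  cz k o1 *m tensf W *m cz k o2
  = tensf (on_qubit o2 (W o2)) *m T2sum k o1 (W k) *m tensf (on_qubit o1 (W o1)).
Proof.
move=> ko1 ko2 o12; rewrite cz_sandwich /T2sum mulmx_sumr mulmx_suml.
apply: eq_bigr => -[a b] _; rewrite !tensf_mul; apply: eq_tensf => i /=.
rewrite /cz_factor /on_qubit /upd /zz_family.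
case: (eqVneq i k) => [->|ik]; first by rewrite PmMPm_Emx (negbTE ko2) (negbTE ko1) mul1mx mulmx1.
case: (eqVneq i o1) => [->|io1]; first by rewrite (negbTE o12) mul1mx mulmx1.
by rewrite (third_qubit_unique ko1 ko2 o12 ik io1) eqxx mul1mx mulmx1.
Qed.

Lemma cz_sandwich_rank k o1 o2 (W : 'I_3 -> M2) :
  k != o1 -> k != o2 -> (forall i, scaled_unitary (W i)) ->
  exists r, schmidt_rank_is (cz k o1 *m tensf W *m cz k o2) r /\ r \in [:: 1; 2; 4]%N.
Proof.
move=> ko1 ko2 sW.
have unit_on i j (A : M2) : scaled_unitary A -> on_qubit i A j \in unitmx.
  by move=> sA; apply/scaled_unitary_unit/scaled_unitary_on_qubit.
case: (eqVneq o1 o2) => [<- | o12].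
  have [z kz oz] := third_qubit ko1.
  have [r [rank_r hr]] := czK_rank_cases ko1 (sW k) (sW o1).
  exists r; split=> //; rewrite (sandwich_same _ ko1 kz oz).
  by apply: schmidt_rank_local => // i; [apply: unit_on | apply: unitmx1].
have [r [rank_r hr]] := T2sum_rank_cases ko1 (sW k).
exists r; split=> //; rewrite (sandwich_diff _ ko1 ko2 o12).
by apply: schmidt_rank_local => // i; apply: unit_on.
Qed.

End ThreeQubits.

Arguments cz {R} k o.

Lemma local_unitary_tensf (R : realType) (L : 'M[complex R]_(2 * 2 * 2)) :
  local_unitary L -> exists2 V : 'I_3 -> 'M[complex R]_2,
    forall i, unitary2 (V i) & L = tensf V.
Proof.
move=> [V [W [X [hV hW hX ->]]]].
exists (fun i => if i == 0 then V else if i == 1 then W else X) => // i.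
by case: (i == 0) => //; case: (i == 1).
Qed.

Theorem theorem6 (R : realType) (L1 L2 L3 : 'M[complex R]_(2 * 2 * 2))
    (c1 t1 c2 t2 : 'I_3) :
  local_unitary L1 -> local_unitary L2 -> local_unitary L3 ->
  c1 != t1 -> c2 != t2 ->
  exists r : nat,
    schmidt_rank_is (L1 *m cnot3 c1 t1 *m L2 *m cnot3 c2 t2 *m L3) r
    /\ r \in [:: 1; 2; 4]%N.
Proof.
move=> /local_unitary_tensf [V1 uV1 ->] /local_unitary_tensf [V2 uV2 ->].
move=> /local_unitary_tensf [V3 uV3 ->] ct1 ct2.
have [k /andP [k1 k2]] := shared_qubit ct1 ct2.
have [o1 ko1 [N1 [N1' [sN1 sN1' ->]]]] := cnot_cz_at R ct1 k1.
have [o2 ko2 [N2 [N2' [sN2 sN2' ->]]]] := cnot_cz_at R ct2 k2.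
pose W i := N1' i *m V2 i *m N2 i.
have sW i : scaled_unitary (W i).
  exact: scaled_unitaryM (scaled_unitaryM (sN1' i) (unitary_scaled (uV2 i))) (sN2 i).
have [r [rank_r hr]] := cz_sandwich_rank ko1 ko2 sW.
exists r; split=> //.
have -> : tensf V1 *m (tensf N1 *m cz k o1 *m tensf N1') *m tensf V2
          *m (tensf N2 *m cz k o2 *m tensf N2') *m tensf V3
        = tensf (fun i => V1 i *m N1 i) *m (cz k o1 *m tensf W *m cz k o2)
          *m tensf (fun i => N2' i *m V3 i).
  by rewrite -!tensf_mul !mulmxA.
apply: schmidt_rank_local rank_r => i; rewrite unitmx_mul.
- by rewrite (scaled_unitary_unit (unitary_scaled (uV1 i))) (scaled_unitary_unit (sN1 i)).
- by rewrite (scaled_unitary_unit (sN2' i)) (scaled_unitary_unit (unitary_scaled (uV3 i))).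
Qed.
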